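(* Let $\mathbb{F}$ be an algebraically closed field with $\mathrm{char}\,\mathbb{F}=2$, and let $\mathcal{A}$ be a (not necessarily unital) subalgebra of $\mathbf{O}$ with $\mathcal{A}\not\subseteq\mathbf{O}_0$ and $\dim\mathcal{A}\ge2$. Then there exists $g\in{\rm G}_2$ such that one of the following holds: (a) $\{e_1,\mathbf{u}_1\}\subseteq g\mathcal{A}$; (b) $\{e_1,\mathbf{v}_1\}\subseteq g\mathcal{A}$; (c) $\{e_1,e_2\}\subseteq g\mathcal{A}$.
   Context: The split octonion algebra $\mathbf{O}$ is the 8-dimensional $\mathbb{F}$-vector space of formal matrices $a=\begin{pmatrix}\alpha&\mathbf{u}\\ \mathbf{v}&\beta\end{pmatrix}$ with $\alpha,\beta\in\mathbb{F}$, $\mathbf{u},\mathbf{v}\in\mathbb{F}^3$, with multiplication $\begin{pmatrix}\alpha&\mathbf{u}\\ \mathbf{v}&\beta\end{pmatrix}\begin{pmatrix}\alpha'&\mathbf{u}'\\ \mathbf{v}'&\beta'\end{pmatrix}=\begin{pmatrix}\alpha\alpha'+\mathbf{u}\cdot\mathbf{v}'&\alpha\mathbf{u}'+\beta'\mathbf{u}-\mathbf{v}\times\mathbf{v}'\\ \alpha'\mathbf{v}+\beta\mathbf{v}'+\mathbf{u}\times\mathbf{u}'&\beta\beta'+\mathbf{v}\cdot\mathbf{u}'\end{pmatrix}$ (dot product and cross product on $\mathbb{F}^3$). Trace $\mathrm{tr}(a)=\alpha+\beta$, $\mathbf{O}_0=\{a\in\mathbf{O}\mid\mathrm{tr}(a)=0\}$.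 With $\mathbf{c}_1$ the first standard basis vector of $\mathbb{F}^3$: $e_1$ has $\alpha=1$ and all else $0$, $e_2$ has $\beta=1$ and all else $0$, $\mathbf{u}_1$ has $\mathbf{u}=\mathbf{c}_1$ and all else $0$, $\mathbf{v}_1$ has $\mathbf{v}=\mathbf{c}_1$ and all else $0$. ${\rm G}_2=\mathrm{Aut}(\mathbf{O})$. *)

From HB Require Import structures.
From mathcomp Require Import all_boot all_order all_algebra.
Set Implicit Arguments. Unset Strict Implicit. Unset Printing Implicit Defensive.
Import Order.TTheory GRing.Theory.
Local Open Scope ring_scope.

(* The split octonions over F are modelled as row vectors 'rV[F]_8:
   coordinate 0 = alpha, coordinates 1,2,3 = u, coordinates 4,5,6 = v,
   coordinate 7 = beta. *)
Section Octonions.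
Variable F : fieldType.

Definition oct := 'rV[F]_8.

Definition oalpha (a : oct) : F := a 0 (inord 0).
Definition obeta  (a : oct) : F := a 0 (inord 7).
Definition ou (a : oct) : 'rV[F]_3 := \row_(j < 3) a 0 (inord j.+1).
Definition ov (a : oct) : 'rV[F]_3 := \row_(j < 3) a 0 (inord (j + 4)).

(* the formal matrix [[alpha, u], [v, beta]] *)
Definition mkO (al : F) (u v : 'rV[F]_3) (be : F) : oct :=
  \row_(i < 8) nth 0 [:: al; u 0 (inord 0); u 0 (inord 1); u 0 (inord 2);
                          v 0 (inord 0); v 0 (inord 1); v 0 (inord 2); be] i.

Definition dot3 (u v : 'rV[F]_3) : F := \sum_(i < 3) u 0 i * v 0 i.
Definition cross3 (u v : 'rV[F]_3) : 'rV[F]_3 :=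
  let c := fun (w : 'rV[F]_3) (k : nat) => w 0 (inord k) in
  \row_(i < 3) nth 0 [:: c u 1 * c v 2 - c u 2 * c v 1;
                          c u 2 * c v 0 - c u 0 * c v 2;
                          c u 0 * c v 1 - c u 1 * c v 0] i.

Definition omul (a b : oct) : oct :=
  mkO (oalpha a * oalpha b + dot3 (ou a) (ov b))
      (oalpha a *: ou b + obeta b *: ou a - cross3 (ov a) (ov b))
      (oalpha b *: ov a + obeta a *: ov b + cross3 (ou a) (ou b))
      (obeta a * obeta b + dot3 (ov a) (ou b)).

Definition otr (a : oct) : F := oalpha a + obeta a.

Definition O0 : pred oct := fun a => otr a == 0.

Definition c1 : 'rV[F]_3 := \row_(j < 3) (if val j == 0%N then 1 else 0).
Definition e1 : oct := mkO 1 0 0 0.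
Definition e2 : oct := mkO 0 0 0 1.
Definition u1 : oct := mkO 0 c1 0 0.
Definition v1 : oct := mkO 0 0 c1 0.

Definition is_subalgebra (A : {vspace oct}) : Prop :=
  forall x y, x \in A -> y \in A -> omul x y \in A.

Definition isG2 (g : oct -> oct) : Prop :=
  [/\ forall (c : F) (x y : oct), g (c *: x + y) = c *: g x + g y,
      bijective g &
      forall x y, g (omul x y) = omul (g x) (g y)].

Definition in_image (g : oct -> oct) (A : {vspace oct}) (x : oct) : Prop :=
  exists2 a, a \in A & g a = x.

End Octonions.

(* Rescaling an element of A of nonzero trace gives b in A with
   tr b = 1.  If n(b) != 0, the quadratic identity x^2 = tr(x) x - n(x) 1 puts
   1 = e1 + e2 in A, and since char F = 2 the element b + m 1, with
   m^2 + m + n(b) = 0, still has trace 1 and now has norm 0.  G2 acts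
   transitively on the elements of trace 1 and norm 0 (the idempotents other
   than 0 and 1), so we may take e1 in A.  An x in A outside F e1 splits
   along the Peirce decomposition x = alpha e1 + u + v + beta e2, whose pieces
   lie in A as u = e1 x - (e1 x) e1 and v = x e1 - (e1 x) e1.  If beta != 0
   then e2 is in A; otherwise u or v is nonzero, and the stabiliser of e1 and
   e2 in G2, which acts on u by SL_3 and on v by its contragredient, moves it
   to a multiple of u1 or v1. *)

From HB Require Import structures.
From mathcomp Require Import all_boot all_order all_algebra.
From Stdlib Require Import Classical.
From mathcomp Require Import ring.
Set Implicit Arguments. Unset Strict Implicit. Unset Printing Implicit Defensive.
Import GRing.Theory.
Local Open Scope ring_scope.

Lemma exists_notin_vline (K : fieldType) (vT : vectType K) (U : {vspace vT}) (v : vT) :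
  (1 < \dim U)%N -> exists2 x, x \in U & x \notin <[v]>%VS.
Proof.
move=> dimU; have /allPn[x /vbasis_mem xU xv] : ~~ all (mem <[v]>%VS) (vbasis U).
  apply: contraL dimU => /allP/span_subvP; rewrite (span_basis (vbasisP U)) -leqNgt.
  by move/dimvS/leq_trans; apply; rewrite dim_vline leq_b1.
by exists x.
Qed.

Section SplitOctonions.
Variable F : fieldType.

Definition oct8 (x0 x1 x2 x3 x4 x5 x6 x7 : F) : oct F :=
  \row_(i < 8) nth 0 [:: x0; x1; x2; x3; x4; x5; x6; x7] i.

Definition ocoord (x : oct F) (k : nat) : F := x 0 (inord k).

Definition omap8 (f : F -> F -> F -> F -> F -> F -> F -> F -> oct F) (x : oct F) : oct F :=
  f (ocoord x 0) (ocoord x 1) (ocoord x 2) (ocoord x 3)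
    (ocoord x 4) (ocoord x 5) (ocoord x 6) (ocoord x 7).

Definition oone : oct F := oct8 1 0 0 0 0 0 0 1.

Definition onorm (x : oct F) : F :=
  ocoord x 0 * ocoord x 7
  - (ocoord x 1 * ocoord x 4 + ocoord x 2 * ocoord x 5 + ocoord x 3 * ocoord x 6).

Definition upart : oct F -> oct F :=
  omap8 (fun _ x1 x2 x3 _ _ _ _ => oct8 0 x1 x2 x3 0 0 0 0).
Definition vpart : oct F -> oct F :=
  omap8 (fun _ _ _ _ x4 x5 x6 _ => oct8 0 0 0 0 x4 x5 x6 0).

Definition vshear (a0 a1 a2 : F) : oct F -> oct F :=
  omap8 (fun x0 x1 x2 x3 x4 x5 x6 x7 =>
    let s := a0 * x1 + a1 * x2 + a2 * x3 in
    let d := x0 - x7 - s in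
    oct8 (x0 - s) (x1 + (a1 * x6 - a2 * x5)) (x2 + (a2 * x4 - a0 * x6))
         (x3 + (a0 * x5 - a1 * x4)) (x4 + d * a0) (x5 + d * a1) (x6 + d * a2) (x7 + s)).

Definition oswap : oct F -> oct F :=
  omap8 (fun x0 x1 x2 x3 x4 x5 x6 x7 =>
    oct8 x7 (- x4) (- x5) (- x6) (- x1) (- x2) (- x3) x0).

Definition ocycle : oct F -> oct F :=
  omap8 (fun x0 x1 x2 x3 x4 x5 x6 x7 => oct8 x0 x2 x3 x1 x5 x6 x4 x7).

Definition ushear (c d : F) : oct F -> oct F :=
  omap8 (fun x0 x1 x2 x3 x4 x5 x6 x7 =>
    oct8 x0 x1 (x2 + c * x1) (x3 + d * x1) (x4 - c * x5 - d * x6) x5 x6 x7).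

Lemma oct8_eta (x : oct F) :
  x = oct8 (ocoord x 0) (ocoord x 1) (ocoord x 2) (ocoord x 3)
           (ocoord x 4) (ocoord x 5) (ocoord x 6) (ocoord x 7).
Proof.
apply/rowP => -[[|[|[|[|[|[|[|[|//]]]]]]]] lt_i8]; rewrite /ocoord !mxE /=;
by congr (x 0 _); apply: val_inj; rewrite /= inordK.
Qed.

Lemma oct8_ind (P : oct F -> Prop) :
  (forall x0 x1 x2 x3 x4 x5 x6 x7, P (oct8 x0 x1 x2 x3 x4 x5 x6 x7)) -> forall x, P x.
Proof. by move=> P8 x; rewrite (oct8_eta x). Qed.

Lemma ocoord_oct8 x0 x1 x2 x3 x4 x5 x6 x7 k : (k < 8)%N ->
  ocoord (oct8 x0 x1 x2 x3 x4 x5 x6 x7) k = nth 0 [:: x0; x1; x2; x3; x4; x5; x6; x7] k.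
Proof. by move=> lt_k8; rewrite /ocoord mxE inordK. Qed.

Lemma omap8_oct8 f x0 x1 x2 x3 x4 x5 x6 x7 :
  omap8 f (oct8 x0 x1 x2 x3 x4 x5 x6 x7) = f x0 x1 x2 x3 x4 x5 x6 x7.
Proof. by rewrite /omap8 !ocoord_oct8. Qed.

Lemma oct80 : oct8 0 0 0 0 0 0 0 0 = 0.
Proof. by apply/rowP => -[[|[|[|[|[|[|[|[|//]]]]]]]] lt_i8]; rewrite !mxE. Qed.

Lemma oct8D a0 a1 a2 a3 a4 a5 a6 a7 b0 b1 b2 b3 b4 b5 b6 b7 :
  oct8 a0 a1 a2 a3 a4 a5 a6 a7 + oct8 b0 b1 b2 b3 b4 b5 b6 b7 =
  oct8 (a0 + b0) (a1 + b1) (a2 + b2) (a3 + b3) (a4 + b4) (a5 + b5) (a6 + b6) (a7 + b7).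
Proof. by apply/rowP => -[[|[|[|[|[|[|[|[|//]]]]]]]] lt_i8]; rewrite !mxE. Qed.

Lemma oct8B a0 a1 a2 a3 a4 a5 a6 a7 b0 b1 b2 b3 b4 b5 b6 b7 :
  oct8 a0 a1 a2 a3 a4 a5 a6 a7 - oct8 b0 b1 b2 b3 b4 b5 b6 b7 =
  oct8 (a0 - b0) (a1 - b1) (a2 - b2) (a3 - b3) (a4 - b4) (a5 - b5) (a6 - b6) (a7 - b7).
Proof. by apply/rowP => -[[|[|[|[|[|[|[|[|//]]]]]]]] lt_i8]; rewrite !mxE. Qed.

Lemma oct8Z (c : F) a0 a1 a2 a3 a4 a5 a6 a7 :
  c *: oct8 a0 a1 a2 a3 a4 a5 a6 a7 =
  oct8 (c * a0) (c * a1) (c * a2) (c * a3) (c * a4) (c * a5) (c * a6) (c * a7).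
Proof. by apply/rowP => -[[|[|[|[|[|[|[|[|//]]]]]]]] lt_i8]; rewrite !mxE. Qed.

Lemma omul_oct8 x0 x1 x2 x3 x4 x5 x6 x7 y0 y1 y2 y3 y4 y5 y6 y7 :
  omul (oct8 x0 x1 x2 x3 x4 x5 x6 x7) (oct8 y0 y1 y2 y3 y4 y5 y6 y7) =
  oct8 (x0 * y0 + x1 * y4 + x2 * y5 + x3 * y6)
       (x0 * y1 + y7 * x1 - (x5 * y6 - x6 * y5))
       (x0 * y2 + y7 * x2 - (x6 * y4 - x4 * y6))
       (x0 * y3 + y7 * x3 - (x4 * y5 - x5 * y4))
       (y0 * x4 + x7 * y4 + (x2 * y3 - x3 * y2))
       (y0 * x5 + x7 * y5 + (x3 * y1 - x1 * y3))
       (y0 * x6 + x7 * y6 + (x1 * y2 - x2 * y1))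
       (x7 * y7 + x4 * y1 + x5 * y2 + x6 * y3).
Proof.
have inord8K k : (k < 8)%N -> val (inord k : 'I_8) = k by exact: inordK.
have inord3K k : (k < 3)%N -> val (inord k : 'I_3) = k by exact: inordK.
rewrite /omul /mkO /oct8 /oalpha /obeta /ou /ov /dot3 /cross3.
apply/rowP => i; rewrite !mxE.
case: i => [[|[|[|[|[|[|[|[|//]]]]]]]] lt_i8] /=;
by rewrite ?big_ord_recr ?big_ord0 /= ?mxE /= ?inord3K // ?inord8K //= ?inord3K // ?inord8K //=; ring.
Qed.

Lemma e1_oct8 : e1 F = oct8 1 0 0 0 0 0 0 0.
Proof. by rewrite /e1 /mkO !mxE. Qed.

Lemma e2_oct8 : e2 F = oct8 0 0 0 0 0 0 0 1.
Proof. by rewrite /e2 /mkO !mxE. Qed.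

Lemma u1_oct8 : u1 F = oct8 0 1 0 0 0 0 0 0.
Proof. by rewrite /u1 /mkO /c1 !mxE /= !inordK. Qed.

Lemma v1_oct8 : v1 F = oct8 0 0 0 0 1 0 0 0.
Proof. by rewrite /v1 /mkO /c1 !mxE /= !inordK. Qed.

Lemma otrE (x : oct F) : otr x = ocoord x 0 + ocoord x 7.
Proof. by []. Qed.

Ltac oct_coords :=
  rewrite ?e1_oct8 ?e2_oct8 ?u1_oct8 ?v1_oct8 /oone /comp /onorm ?otrE;
  rewrite /upart /vpart /vshear /oswap /ocycle /ushear;
  repeat match goal with x : oct F |- _ => move: x; elim/oct8_ind; intros end;
  rewrite ?(oct8Z, oct8D, oct8B, omul_oct8, omap8_oct8) ?ocoord_oct8 //=.

Ltac oct_ring := oct_coords; rewrite ?oppr0; try congr oct8; ring.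

Lemma otrZ (c : F) (x : oct F) : otr (c *: x) = c * otr x.
Proof. by oct_ring. Qed.

Lemma otrD_scale_oone (x : oct F) (m : F) : otr (x + m *: oone) = otr x + m * 2%:R.
Proof. by oct_ring. Qed.

Lemma onormD_scale_oone (x : oct F) (m : F) :
  onorm (x + m *: oone) = onorm x + m * otr x + m ^+ 2.
Proof. by oct_ring. Qed.

Lemma oct_quadratic (x : oct F) : omul x x = otr x *: x - onorm x *: oone.
Proof. by oct_ring. Qed.

Lemma upartE (x : oct F) : upart x = omul (e1 F) x - omul (omul (e1 F) x) (e1 F).
Proof. by oct_ring. Qed.

Lemma vpartE (x : oct F) : vpart x = omul x (e1 F) - omul (omul (e1 F) x) (e1 F).
Proof. by oct_ring. Qed.

Lemma peirce_decomposition (x : oct F) :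
  x = ocoord x 0 *: e1 F + upart x + vpart x + ocoord x 7 *: e2 F.
Proof. by oct_ring. Qed.

Lemma e2_peirce (x : oct F) :
  ocoord x 7 *: e2 F = x - omul (omul (e1 F) x) (e1 F) - upart x - vpart x.
Proof. by oct_ring. Qed.

Lemma vshear_oswap_e1 (b0 b1 b2 v0 v1 v2 s : F) : s = b0 * v0 + b1 * v1 + b2 * v2 ->
  ((oswap \o vshear b0 b1 b2 \o oswap) \o vshear v0 v1 v2) (e1 F) =
  oct8 (1 - s) ((1 - s) * b0) ((1 - s) * b1) ((1 - s) * b2) v0 v1 v2 s.
Proof. by move->; oct_ring. Qed.

Lemma oswapK : involutive oswap.
Proof. by move=> x; oct_ring. Qed.

Lemma oswap_e1 : oswap (e1 F) = e2 F.
Proof. by oct_ring. Qed.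

Lemma oswap_e2 : oswap (e2 F) = e1 F.
Proof. by oct_ring. Qed.

Lemma oswap_u1 : oswap (u1 F) = (-1) *: v1 F.
Proof. by oct_ring. Qed.

Lemma upart_oswap (x : oct F) : upart (oswap x) = oswap (vpart x).
Proof. by oct_ring. Qed.

Lemma otr_oswap (x : oct F) : otr (oswap x) = otr x.
Proof. by oct_ring. Qed.

Lemma onorm_oswap (x : oct F) : onorm (oswap x) = onorm x.
Proof. by oct_ring. Qed.

Lemma isG2_of_inverse (g h : oct F -> oct F) :
  (forall (c : F) (x y : oct F), g (c *: x + y) = c *: g x + g y) ->
  (forall x y, g (omul x y) = omul (g x) (g y)) ->
  cancel g h -> cancel h g -> isG2 g.
Proof. by move=> g_lin g_mul gK hK; split=> //; exists h. Qed.

Lemma isG2_comp (g h : oct F -> oct F) : isG2 g -> isG2 h -> isG2 (g \o h).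
Proof.
move=> [g_lin g_bij g_mul] [h_lin h_bij h_mul]; split=> [c x y||x y] /=.
- by rewrite h_lin g_lin.
- exact: bij_comp.
- by rewrite h_mul g_mul.
Qed.

Lemma isG2_inverse (g : oct F -> oct F) : isG2 g -> exists2 h, isG2 h & cancel g h.
Proof.
move=> [g_lin [h gK hK] g_mul]; exists h => //; split=> [c x y||x y].
- by apply: (can_inj gK); rewrite g_lin !hK.
- by exists g.
- by apply: (can_inj gK); rewrite g_mul !hK.
Qed.

Lemma G2_0 (g : oct F -> oct F) : isG2 g -> g 0 = 0.
Proof.
case=> g_lin _ _; apply: (addrI (g 0)).
by rewrite -{1}(scale1r (g 0)) -g_lin scale1r !addr0.
Qed.

Lemma G2Z (g : oct F -> oct F) (c : F) (x : oct F) : isG2 g -> g (c *: x) = c *: g x.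
Proof.
move=> G2g; have [g_lin _ _] := G2g.
by rewrite -[c *: x]addr0 g_lin (G2_0 G2g) addr0.
Qed.

Lemma G2_memv_line (g : oct F -> oct F) (x e : oct F) :
  isG2 g -> (g x \in <[g e]>%VS) = (x \in <[e]>%VS).
Proof.
move=> G2g; have [_ /bij_inj g_inj _] := G2g.
apply/vlineP/vlineP=> -[k xE]; exists k; last by rewrite xE G2Z.
by apply: g_inj; rewrite xE G2Z.
Qed.

Lemma vshear_G2 (a0 a1 a2 : F) : isG2 (vshear a0 a1 a2).
Proof.
by apply: (isG2_of_inverse (h := vshear (- a0) (- a1) (- a2))) => [c x y|x y|x|x];
  oct_ring.
Qed.

Lemma oswap_G2 : isG2 oswap.
Proof.
by apply: (isG2_of_inverse (h := oswap)) => [c x y|x y|x|x];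
  oct_ring.
Qed.

Lemma ocycle_G2 : isG2 ocycle.
Proof.
by apply: (isG2_of_inverse (h := ocycle \o ocycle)) => [c x y|x y|x|x];
  oct_ring.
Qed.

Lemma ushear_G2 (c d : F) : isG2 (ushear c d).
Proof.
by apply: (isG2_of_inverse (h := ushear (- c) (- d))) => [k x y|x y|x|x];
  oct_ring.
Qed.

#[local] Hint Resolve isG2_comp vshear_G2 oswap_G2 ocycle_G2 ushear_G2 : core.

Lemma e1_G2_orbit (e : oct F) :
  otr e = 1 -> onorm e = 0 -> exists2 g, isG2 g & g (e1 F) = e.
Proof.
wlog e0_neq0 : e / ocoord e 0 != 0 => [wlog_e0 tr_e norm_e|].
  have [e0_eq0|e0_neq0] := eqVneq (ocoord e 0) 0; last exact: wlog_e0.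
  have [g G2g ge1] : exists2 g, isG2 g & g (e1 F) = oswap e.
    apply: wlog_e0; rewrite ?otr_oswap ?onorm_oswap //.
    by rewrite /oswap /omap8 ocoord_oct8 //= -[ocoord e 7]add0r -{1}e0_eq0 -otrE tr_e oner_eq0.
  by exists (oswap \o g); rewrite /= ?ge1 ?oswapK; auto.
rewrite otrE /onorm => tr_e /eqP; rewrite subr_eq0 => /eqP norm_e.
(* With these b, e is the right-hand side of vshear_oswap_e1. *)
set b := fun k => ocoord e k / ocoord e 0.
exists ((oswap \o vshear (b 1%N) (b 2%N) (b 3%N) \o oswap) \o
        vshear (ocoord e 4) (ocoord e 5) (ocoord e 6)); first by auto.
have s_e7 : ocoord e 7 = b 1%N * ocoord e 4 + b 2%N * ocoord e 5 + b 3%N * ocoord e 6.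
  by apply: (mulfI e0_neq0); rewrite norm_e /b; field.
have e0E : 1 - ocoord e 7 = ocoord e 0 by rewrite -tr_e addrK.
rewrite (vshear_oswap_e1 s_e7) e0E [RHS]oct8_eta /b.
by congr oct8; rewrite mulrC divfK.
Qed.

Lemma G2_u_transitive (y : oct F) : upart y != 0 ->
  exists h, [/\ isG2 h, h (e1 F) = e1 F, h (e2 F) = e2 F &
                exists2 w, w != 0 & h (upart y) = w *: u1 F].
Proof.
(* Bring a nonzero coordinate of u to the front with ocycle, then clear the
   other two with ushear. *)
elim/oct8_ind: y => y0 y1 y2 y3 y4 y5 y6 y7; rewrite /upart omap8_oct8 => y_neq0.
have [y1_eq0|y1_neq0] := eqVneq y1 0; last first.
  exists (ushear (- (y2 / y1)) (- (y3 / y1))); split; auto; last exists y1 => //;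
  by oct_coords; congr oct8; field.
have [y2_eq0|y2_neq0] := eqVneq y2 0; last first.
  exists (ushear (- (y3 / y2)) 0 \o ocycle); split; auto; last exists y2 => //;
  by oct_coords; rewrite ?y1_eq0; congr oct8; field.
have y3_neq0 : y3 != 0.
  by apply: contra_neq y_neq0 => y3_eq0; rewrite y1_eq0 y2_eq0 y3_eq0 oct80.
exists (ocycle \o ocycle); split; auto; last exists y3 => //;
by oct_coords; rewrite ?y1_eq0 ?y2_eq0; congr oct8; field.
Qed.

Lemma G2_v_transitive (y : oct F) : vpart y != 0 ->
  exists h, [/\ isG2 h, h (e1 F) = e1 F, h (e2 F) = e2 F &
                exists2 w, w != 0 & h (vpart y) = w *: v1 F].
Proof.
move=> y_neq0; have [|h [G2h he1 he2 [w w_neq0 hy]]] := G2_u_transitive (y := oswap y).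
  by rewrite upart_oswap -(G2_0 oswap_G2) (can_eq oswapK).
exists (oswap \o h \o oswap); split; auto.
- by rewrite /= oswap_e1 he2 oswap_e2.
- by rewrite /= oswap_e2 he1 oswap_e1.
exists (- w); first by rewrite oppr_eq0.
by rewrite /= -upart_oswap hy (G2Z _ _ oswap_G2) oswap_u1 scalerA mulrN1.
Qed.

Lemma oone_in_subalgebra (A : {vspace oct F}) (x : oct F) :
  is_subalgebra A -> x \in A -> onorm x != 0 -> oone \in A.
Proof.
move=> subA xA norm_x; have -> : oone = (onorm x)^-1 *: (otr x *: x - omul x x).
  by rewrite oct_quadratic opprB addrC subrK scalerA mulVf ?scale1r.
by rewrite memvZ // memvB ?memvZ ?subA.
Qed.

End SplitOctonions.

Lemma exists_trace1_norm0 (F : closedFieldType) (A : {vspace oct F}) :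
  2%N \in [pchar F] -> is_subalgebra A -> ~ (forall a, a \in A -> O0 a) ->
  exists2 e, e \in A & otr e = 1 /\ onorm e = 0.
Proof.
move=> char2 subA not_traceless.
have [a aA tr_a] : exists2 a, a \in A & otr a != 0.
  apply: NNPP => no_a; apply: not_traceless => a aA.
  by apply/negPn/negP => tr_a; apply: no_a; exists a.
pose b := (otr a)^-1 *: a.
have bA : b \in A by rewrite memvZ.
have tr_b : otr b = 1 by rewrite otrZ mulVf.
have [norm_b|norm_b] := eqVneq (onorm b) 0; first by exists b.
have [m m_root] := @solve_monicpoly F 2 (nth 0 [:: - onorm b; -1]) isT.
exists (b + m *: oone F); first by rewrite memvD // memvZ // (oone_in_subalgebra subA bA).
rewrite otrD_scale_oone onormD_scale_oone tr_b (pcharf0 char2) mulr0 addr0; split=> //.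
by move: m_root; rewrite !big_ord_recr big_ord0 /= add0r expr0 expr1 !mulr1 => ->; ring.
Qed.

Section SubalgebraImage.
Variables (F : fieldType) (A : {vspace oct F}) (g : oct F -> oct F).
Hypotheses (subA : is_subalgebra A) (G2g : isG2 g).

Lemma in_image_comp (h : oct F -> oct F) (y : oct F) :
  in_image g A y -> in_image (h \o g) A (h y).
Proof. by case=> a aA <-; exists a. Qed.

Lemma in_image_linear (c : F) (y z : oct F) :
  in_image g A y -> in_image g A z -> in_image g A (c *: y + z).
Proof.
case: G2g => g_lin _ _ [a aA <-] [b bA <-].
by exists (c *: a + b); rewrite ?memvD ?memvZ ?g_lin.
Qed.

Lemma in_imageZ (c : F) (y : oct F) : in_image g A y -> in_image g A (c *: y).
Proof. by case=> a aA <-; exists (c *: a); rewrite ?memvZ ?G2Z. Qed.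

Lemma in_imageB (y z : oct F) :
  in_image g A y -> in_image g A z -> in_image g A (y - z).
Proof. by move=> Iy Iz; rewrite addrC -scaleN1r; apply: in_image_linear. Qed.

Lemma in_image_mul (y z : oct F) :
  in_image g A y -> in_image g A z -> in_image g A (omul y z).
Proof.
case: G2g => _ _ g_mul [a aA <-] [b bA <-].
by exists (omul a b); rewrite ?subA ?g_mul.
Qed.

Hypothesis e1A : in_image g A (e1 F).

Lemma in_image_upart (x : oct F) : in_image g A x -> in_image g A (upart x).
Proof. by move=> Ix; rewrite upartE; do ![apply: in_imageB | apply: in_image_mul]. Qed.

Lemma in_image_vpart (x : oct F) : in_image g A x -> in_image g A (vpart x).
Proof. by move=> Ix; rewrite vpartE; do ![apply: in_imageB | apply: in_image_mul]. Qed.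

Lemma in_image_e2 (x : oct F) :
  in_image g A x -> ocoord x 7 != 0 -> in_image g A (e2 F).
Proof.
move=> Ix x7_neq0; rewrite -[e2 F]scale1r -(mulVf x7_neq0) -scalerA e2_peirce.
apply/in_imageZ/in_imageB; last exact: in_image_vpart.
apply: in_imageB; last exact: in_image_upart.
by apply: in_imageB => //; do !apply: in_image_mul.
Qed.

Lemma G2_normal_form (x : oct F) : in_image g A x -> x \notin <[e1 F]>%VS ->
  exists h : oct F -> oct F, isG2 h /\
    [\/ in_image h A (e1 F) /\ in_image h A (u1 F),
        in_image h A (e1 F) /\ in_image h A (v1 F) |
        in_image h A (e1 F) /\ in_image h A (e2 F)].
Proof.
move=> Ix x_notin.
have [x7_eq0|x7_neq0] := eqVneq (ocoord x 7) 0; last first.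
  by exists g; split=> //; apply: Or33; split=> //; apply: in_image_e2 Ix x7_neq0.
have [u_eq0|u_neq0] := eqVneq (upart x) 0; last first.
  have [h [G2h he1 _ [w w_neq0 hu]]] := G2_u_transitive u_neq0.
  exists (h \o g); split; first exact: isG2_comp.
  apply: Or31; split; first by rewrite -he1; apply: in_image_comp.
  have -> : u1 F = h (w^-1 *: upart x) by rewrite G2Z // hu scalerA mulVf ?scale1r.
  by apply/in_image_comp/in_imageZ/in_image_upart.
have [v_eq0|v_neq0] := eqVneq (vpart x) 0; last first.
  have [h [G2h he1 _ [w w_neq0 hv]]] := G2_v_transitive v_neq0.
  exists (h \o g); split; first exact: isG2_comp.
  apply: Or32; split; first by rewrite -he1; apply: in_image_comp.
  have -> : v1 F = h (w^-1 *: vpart x) by rewrite G2Z // hv scalerA mulVf ?scale1r.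
  by apply/in_image_comp/in_imageZ/in_image_vpart.
move: x_notin; rewrite (peirce_decomposition x).
by rewrite x7_eq0 u_eq0 v_eq0 scale0r !addr0 memvZ ?memv_line.
Qed.

End SubalgebraImage.

Theorem lemma6p10 (F : closedFieldType) (A : {vspace oct F}) :
  2%N \in [pchar F] ->
  is_subalgebra A ->
  ~ (forall a, a \in A -> O0 a) ->
  (2 <= \dim A)%N ->
  exists g : oct F -> oct F, isG2 g /\
    [\/ in_image g A (e1 F) /\ in_image g A (u1 F),
        in_image g A (e1 F) /\ in_image g A (v1 F) |
        in_image g A (e1 F) /\ in_image g A (e2 F)].
Proof.
move=> char2 subA not_traceless dimA.
have [e eA [tr_e norm_e]] := exists_trace1_norm0 char2 subA not_traceless.
have [h G2h he1] := e1_G2_orbit tr_e norm_e.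
have [g G2g hK] := isG2_inverse G2h.
have ge : g e = e1 F by rewrite -he1 hK.
have [x xA x_notin] := exists_notin_vline e dimA.
have e1A : in_image g A (e1 F) by exists e.
have gxA : in_image g A (g x) by exists x.
by apply: (G2_normal_form subA G2g e1A gxA); rewrite -ge G2_memv_line.
Qed.
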